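(* For any well-typed CC expression $\Gamma\vdash M:A$, $[\![A]\!]_d\subseteq[\![M]\!]_d$.
   Context: CC: expressions $x\mid U_i\mid\Pi x{:}A.B\mid L\,M\mid\lambda x{:}A.M$ with the standard typing rules (variable, $U_i:U_{i+1}$, $\Pi x{:}A.B:U_{\max(i,j)}$, application $M\,N:B[N/x]$ for $M:\Pi x{:}A.B$, $N:A$, abstraction $\lambda x{:}A.M:\Pi x{:}A.B$ for $M:B$ under $x{:}A$, conversion along $\beta\eta$-equivalence to a type in some universe). Each $\lambda$ is tagged with a distinct $i$ ($\lambda^i$), corresponding to label $\ell_i$. Target DCC: expressions $x\mid U_i\mid\Pi x{:}A.B\mid L@M\mid\ell_i\{\overline M\}$ and label contexts $\Delta::=\cdot\mid\Delta,\ell_i(\{\overline x{:}\overline A\},x{:}A\mapsto M:B)$. Defined by induction on the (implicit) typing derivation: for $\Gamma\vdash M:A$, $\mathrm{FV}(M)=\mathrm{FV}(A_1)\cup\dots\cup\mathrm{FV}(A_n)\cup(x_1{:}A_1,\dots,x_n{:}A_n)$ where $x_1,\dots,x_n$ are the unbound variables of $M$ and $A$ and $\Gamma\vdash x_k:A_k$ ($\cup$ appends the right operand's new entries in order; same for label contexts). $[\![-]\!]$: $x\mapsto x$, $U_i\mapsto U_i$, $\Pi x{:}A.B\mapsto\Pi x{:}[\![A]\!].[\![B]\!]$, $M\,N\mapsto[\![M]\!]@[\![N]\!]$, $\lambda^ix{:}A.M\mapsto\ell_i\{\overline x\}$, $\overline x{:}\overline A=\mathrm{FV}(\lambda^ix{:}A.M)$.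 $[\![-]\!]_d$: universe $\mapsto\cdot$; variable of type $A\mapsto[\![A]\!]_d$; $\Pi x{:}A.B\mapsto[\![A]\!]_d\cup[\![B]\!]_d$; $M\,N:B[N/x]$ (with $M:\Pi x{:}A.B$) $\mapsto[\![M]\!]_d\cup[\![N]\!]_d\cup[\![B[N/x]]\!]_d$; $\lambda^ix{:}A.M:\Pi x{:}A.B\mapsto([\![A]\!]_d\cup[\![M]\!]_d),\ell_i(\{\overline x{:}[\![\overline A]\!]\},x{:}[\![A]\!]\mapsto[\![M]\!]:[\![B]\!])$; a conversion from $M:A$ to $M:B\mapsto[\![M]\!]_d\cup[\![B]\!]_d$. $\Delta_1\subseteq\Delta_2$ means every entry of $\Delta_1$ is an entry of $\Delta_2$. *)

From Stdlib Require Import List Arith PeanoNat ClassicalEpsilon.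
Import ListNotations.

Inductive term : Type :=
| Var  (x : nat)
| Univ (i : nat)
| Pi   (x : nat) (A B : term)
| App  (M N : term)
| Lam  (i : nat) (x : nat) (A M : term).   (* lambda^i x:A. M, tag i <-> label l_i *)

Fixpoint fv (t : term) : list nat :=
  match t with
  | Var x => [x]
  | Univ _ => []
  | Pi x A B => fv A ++ remove Nat.eq_dec x (fv B)
  | App M N => fv M ++ fv N
  | Lam _ x A M => fv A ++ remove Nat.eq_dec x (fv M)
  end.

Definition memb (x : nat) (l : list nat) : bool := existsb (Nat.eqb x) l.
Definition fresh (l : list nat) : nat := S (fold_right max 0 l).
Definition upd (s : nat -> term) (y : nat) (t : term) : nat -> term :=
  fun w => if Nat.eqb w y then t else s w.

(* capture-avoiding simultaneous substitution: a bound variable is renamed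
   (to a fresh name) only when it would capture *)
Definition avoid (s : nat -> term) (y : nat) (B : term) : list nat :=
  flat_map (fun w => fv (s w)) (remove Nat.eq_dec y (fv B)).
Definition pick (s : nat -> term) (y : nat) (B : term) : nat :=
  if memb y (avoid s y B) then fresh (avoid s y B) else y.

Fixpoint ssubst (s : nat -> term) (t : term) : term :=
  match t with
  | Var x => s x
  | Univ i => Univ i
  | Pi y A B => let z := pick s y B in Pi z (ssubst s A) (ssubst (upd s y (Var z)) B)
  | App M N => App (ssubst s M) (ssubst s N)
  | Lam i y A M => let z := pick s y M in
                   Lam i z (ssubst s A) (ssubst (upd s y (Var z)) M)
  end.

Definition subst1 (x : nat) (N : term) (B : term) : term := ssubst (upd Var x N) B.

(* beta-eta equivalence (on named terms, so also closed under alpha-renaming) *)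
Inductive conv : term -> term -> Prop :=
| cv_refl t : conv t t
| cv_sym t u : conv t u -> conv u t
| cv_trans t u v : conv t u -> conv u v -> conv t v
| cv_beta i x A M N : conv (App (Lam i x A M) N) (subst1 x N M)
| cv_eta i x A M : ~ In x (fv M) -> conv (Lam i x A (App M (Var x))) M
| cv_alpha_pi x y A B : ~ In y (fv B) -> conv (Pi x A B) (Pi y A (subst1 x (Var y) B))
| cv_alpha_lam i x y A M : ~ In y (fv M) -> conv (Lam i x A M) (Lam i y A (subst1 x (Var y) M))
| cv_pi x A A' B B' : conv A A' -> conv B B' -> conv (Pi x A B) (Pi x A' B')
| cv_app M M' N N' : conv M M' -> conv N N' -> conv (App M N) (App M' N')
| cv_lam i x A A' M M' : conv A A' -> conv M M' -> conv (Lam i x A M) (Lam i x A' M').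

(* ---------------- contexts: newest binding first, Γ,x:A = (x,A)::Γ ------- *)
Definition ctx := list (nat * term).

Fixpoint split_ctx (x : nat) (G : ctx) : option (term * ctx) :=
  match G with
  | [] => None
  | (y, A) :: G' => if Nat.eqb x y then Some (A, G') else split_ctx x G'
  end.
Definition lookup (x : nat) (G : ctx) : option term := option_map fst (split_ctx x G).

Inductive wf : ctx -> Type :=
| wf_nil : wf []
| wf_cons G x A i : wf G -> ~ In x (map fst G) -> has_type G A (Univ i) -> wf ((x, A) :: G)
with has_type : ctx -> term -> term -> Type :=
| T_var G x A i : wf G -> lookup x G = Some A -> has_type G A (Univ i) ->
    has_type G (Var x) A
| T_univ G i : wf G -> has_type G (Univ i) (Univ (S i))
| T_pi G x A B i j : has_type G A (Univ i) -> has_type ((x, A) :: G) B (Univ j) ->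
    has_type G (Pi x A B) (Univ (max i j))
| T_app G M N x A B k : has_type G M (Pi x A B) -> has_type G N A ->
    has_type G (subst1 x N B) (Univ k) ->
    has_type G (App M N) (subst1 x N B)
| T_lam G i x A M B j k : wf G -> has_type G A (Univ j) ->
    has_type ((x, A) :: G) M B -> has_type ((x, A) :: G) B (Univ k) ->
    has_type G (Lam i x A M) (Pi x A B)
| T_conv G M A B i : has_type G M A -> has_type G B (Univ i) -> conv A B ->
    has_type G M B.

Definition union {T : Type} (l1 l2 : list T) : list T :=
  fold_left (fun acc e => if excluded_middle_informative (In e acc) then acc
                          else acc ++ [e]) l2 l1.

(* FV for a list ys of unbound variables (of M and of its type):
   FV(A_1) ∪ ... ∪ FV(A_n) ∪ (x_1:A_1,...,x_n:A_n), where x_1..x_n are the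
   variables of Γ occurring in ys, listed in context order (oldest first),
   A_k is the type of x_k in Γ and FV(A_k) is computed in the part of Γ
   preceding x_k (types A_k have universe types, with no free variables). *)
Fixpoint FVn (n : nat) (G : ctx) (ys : list nat) : list (nat * term) :=
  match n with
  | 0 => []
  | S n' =>
      let xs := rev (filter (fun p => memb (fst p) ys) G) in
      union (fold_left (fun acc p =>
                union acc (match split_ctx (fst p) G with
                           | Some (A, G') => FVn n' G' (fv A)
                           | None => []
                           end)) xs [])
            xs
  end.
Definition FV (G : ctx) (M A : term) : list (nat * term) :=
  FVn (S (length G)) G (fv M ++ fv A).

Inductive tterm : Type :=
| tVar  (x : nat)
| tUniv (i : nat)
| tPi   (x : nat) (A B : tterm)
| tApp  (L M : tterm)
| tLab  (i : nat) (args : list tterm).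

(* l_i({x1:A1,...,xn:An}, x:A |-> M : B) *)
Record entry : Type := Entry {
  e_lab : nat; e_env : list (nat * tterm); e_arg : nat; e_argty : tterm;
  e_body : tterm; e_bodyty : tterm }.
Definition lctx := list entry.

Definition lsubset (D1 D2 : lctx) : Prop := forall e, In e D1 -> In e D2.

Fixpoint tr {G M A} (D : has_type G M A) : tterm :=
  match D with
  | T_var _ x _ _ _ _ _ => tVar x
  | T_univ _ i _ => tUniv i
  | T_pi _ x _ _ _ _ DA DB => tPi x (tr DA) (tr DB)
  | T_app _ _ _ _ _ _ _ DM DN _ => tApp (tr DM) (tr DN)
  | T_lam G i x A M B _ _ _ _ _ _ =>
      tLab i (map (fun p => tVar (fst p)) (FV G (Lam i x A M) (Pi x A B)))
  | T_conv _ _ _ _ _ DM _ _ => tr DM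
  end.

Fixpoint wf_tys {G} (W : wf G) : list (nat * tterm) :=
  match W with
  | wf_nil => []
  | wf_cons _ x _ _ W' _ DA => (x, tr DA) :: wf_tys W'
  end.

Definition ty_of (x : nat) (l : list (nat * tterm)) : tterm :=
  match find (fun p => Nat.eqb (fst p) x) l with
  | Some p => snd p
  | None => tUniv 0
  end.

Fixpoint trd {G M A} (D : has_type G M A) : lctx :=
  match D with
  | T_var _ _ _ _ _ _ DA => trd DA
  | T_univ _ _ _ => []
  | T_pi _ _ _ _ _ _ DA DB => union (trd DA) (trd DB)
  | T_app _ _ _ _ _ _ _ DM DN DBN => union (union (trd DM) (trd DN)) (trd DBN)
  | T_lam G i x A M B _ _ W DA DM DB =>
      union (trd DA) (trd DM) ++
        [Entry i
           (map (fun p => (fst p, ty_of (fst p) (wf_tys W)))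
                (FV G (Lam i x A M) (Pi x A B)))
           x (tr DA) (tr DM) (tr DB)]
  | T_conv _ _ _ _ _ DM DB _ => union (trd DM) (trd DB)
  end.

(* The variable, application and conversion
   rules carry a derivation of the type among their premises; the universe and
   Pi rules have a universe as type, derived by the universe rule with empty
   [[-]]_d; for a lambda, the Pi-type is derived from the domain premise and
   the induction hypothesis for the body. *)
From Stdlib Require Import List ClassicalEpsilon.
Import ListNotations.

Lemma in_union {T : Type} (l1 l2 : list T) (e : T) :
  In e (union l1 l2) <-> In e l1 \/ In e l2.
Proof.
  unfold union; revert l1; induction l2 as [|a l2 IH]; intros l1; simpl.
  - tauto.
  - rewrite IH.
    destruct excluded_middle_informative.
    + split; [tauto|]. intros [H|[<-|H]]; auto.
    + rewrite in_app_iff; simpl. tauto.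
Qed.

Lemma lsubset_refl (D : lctx) : lsubset D D.
Proof. intros e He; exact He. Qed.

Lemma lsubset_nil (D : lctx) : lsubset [] D.
Proof. intros e []. Qed.

Lemma lsubset_unionr (D D1 D2 : lctx) : lsubset D D2 -> lsubset D (union D1 D2).
Proof. intros H e He; apply in_union; auto. Qed.

Lemma lsubset_union (D1 D2 D1' D2' : lctx) :
  lsubset D1 D1' -> lsubset D2 D2' -> lsubset (union D1 D2) (union D1' D2').
Proof. intros H1 H2 e He; apply in_union in He; apply in_union; firstorder. Qed.

Lemma lsubset_appr (D D1 D2 : lctx) : lsubset D D1 -> lsubset D (D1 ++ D2).
Proof. intros H e He; apply in_or_app; auto. Qed.

Lemma has_type_wf (G : ctx) (M A : term) : has_type G M A -> wf G.
Proof. induction 1; auto. Qed.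

Theorem lemma3p9 (G : ctx) (M A : term) (D : has_type G M A) :
  exists (j : nat) (DA : has_type G A (Univ j)), lsubset (trd DA) (trd D).
Proof.
  induction D.
  - exists i, D; apply lsubset_refl.
  - exists (S (S i)), (T_univ G (S i) w); apply lsubset_nil.
  - exists (S (max i j)), (T_univ G (max i j) (has_type_wf _ _ _ D1)).
    apply lsubset_nil.
  - exists k, D3; apply lsubset_unionr, lsubset_refl.
  - destruct IHD2 as [j' [DB HB]].
    exists (max j j'), (T_pi G x A B j j' D1 DB); simpl.
    apply lsubset_appr, lsubset_union; [apply lsubset_refl | exact HB].
  - exists i, D2; apply lsubset_unionr, lsubset_refl.
Qed.
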